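(* Let $\rho\colon\mathrm{Isom}(\mathbf H^1_{\mathbb C})_o\to\mathrm{Isom}(\mathbf H^\infty_{\mathbb C})_o$ be an irreducible representation and let $t\in\mathbb R$ be such that the lift $\rho(g(\lambda,0))$ satisfies $\rho(g(\lambda,0))\eta_1=\lambda^t\eta_1$ for all $\lambda>0$ (i.e. $\chi(\lambda)=\lambda^t$). Then $0<t\le2$.
   Context: $\mathcal H$: separable complex Hilbert space with strongly non-degenerate Hermitian form $B$ (linear in first variable) of signature $(1,\infty)$; $\mathbf H^\infty_{\mathbb C}=\{[v]:B(v,v)>0\}$, $\cosh d([v],[w])=|B(v,w)|/\sqrt{B(v,v)B(w,w)}$, boundary = isotropic lines. $\mathbf H^1_{\mathbb C}$: $\mathbb C^2$ with $B(z,w)=z_1\bar w_1-z_2\bar w_2$, $\xi_{1,2}=(e_1\pm e_2)/\sqrt2$; $g(\lambda,b)\in SU(1,1)$ has matrix $\begin{pmatrix}\lambda&ib\\0&\lambda^{-1}\end{pmatrix}$ in basis $(\xi_1,\xi_2)$, $P=\{g(\lambda,b)\}$. Representations are orbitally continuous; irreducible = no fixed point in $\mathbf H^\infty_{\mathbb C}\cup\partial\mathbf H^\infty_{\mathbb C}$, no invariant pair of boundary points, no proper invariant complex hyperbolic subspace. For such $\rho$: $\eta_1$ = unique common fixed boundary point of $\rho(P)$, $\eta_2$ = other endpoint of the common axis of the $\rho(g(\lambda,0))$; isotropic representatives with $B(\eta_1,\eta_2)=1$. $\rho|_P$ lifts to a continuous homomorphism $P\to U(B)$ (still denoted $\rho$)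 with $B(\rho(g(\lambda,b))\eta_1,\eta_2)>0$; then $\rho(g(\lambda,b))\eta_1=\chi(\lambda)\eta_1$ for a continuous isomorphism $\chi\colon\mathbb R_{>0}\to\mathbb R_{>0}$, so $\chi(\lambda)=\lambda^t$ for some real $t$, and $t=\ell(\rho)$ is the displacement of $\rho$. *)

From HB Require Import structures.
From mathcomp Require Import all_boot all_order all_algebra.
From mathcomp Require Import complex.
From mathcomp Require Import reals exp.
Set Implicit Arguments. Unset Strict Implicit. Unset Printing Implicit Defensive.
Import Order.TTheory GRing.Theory Num.Theory.
Local Open Scope ring_scope.
Local Open Scope complex_scope.

Definition hermitian_form (R : realType) (V : lmodType R[i])
    (B : V -> V -> R[i]) : Prop :=
  (forall (a : R[i]) (u v w : V), B (a *: u + v) w = a * B u w + B v w) /\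
  (forall u v : V, B v u = (B u v)^*).

(* Given a unit positive vector e (B e e = 1), the associated Hilbert
   inner product:  <u,v> = B(u_e,v_e) - B(u_perp, v_perp)
                        = 2 B(u,e) conj(B(v,e)) - B(u,v). *)
Definition hip (R : realType) (V : lmodType R[i]) (B : V -> V -> R[i])
    (e u v : V) : R[i] :=
  2%:R * B u e * (B v e)^* - B u v.

Definition hnorm (R : realType) (V : lmodType R[i]) (B : V -> V -> R[i])
    (e u : V) : R :=
  Num.sqrt (complex.Re (hip B e u u)).

(* (H, B) is a separable infinite-dimensional complex Hilbert space with a
   strongly non-degenerate Hermitian form B of signature (1, oo):
   H = C e (+) e^perp, B e e = 1, -B is positive definite on e^perp, and H is
   complete and separable for the Hilbert norm hnorm B e (the choice of e
   only changes the norm to an equivalent one). *)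
Definition sig1inf_space (R : realType) (V : lmodType R[i])
    (B : V -> V -> R[i]) (e : V) : Prop :=
  [/\ hermitian_form B,
      B e e = 1,
      (forall w : V, B w e = 0 -> w != 0 -> B w w < 0) &
      [/\
      (forall s : nat -> V,
         (forall eps : R, 0 < eps -> exists N : nat, forall m n : nat,
            (N <= m)%N -> (N <= n)%N -> hnorm B e (s m - s n) < eps) ->
         exists v : V, forall eps : R, 0 < eps -> exists N : nat,
            forall n : nat, (N <= n)%N -> hnorm B e (s n - v) < eps),
      (exists s : nat -> V, forall (v : V) (eps : R), 0 < eps ->
         exists n : nat, hnorm B e (v - s n) < eps) &
      (forall n : nat, exists f : 'I_n -> V,
         forall a : 'I_n -> R[i], \sum_(i < n) a i *: f i = 0 ->
         forall i, a i = 0)]].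

Definition posv (R : realType) (V : lmodType R[i]) (B : V -> V -> R[i])
    (v : V) : Prop := 0 < B v v.

Definition isotropic (R : realType) (V : lmodType R[i]) (B : V -> V -> R[i])
    (v : V) : Prop := v != 0 /\ B v v = 0.

Definition same_line (R : realType) (V : lmodType R[i]) (v w : V) : Prop :=
  exists c : R[i], c != 0 /\ w = c *: v.

(* cosh d([v],[w]) = |B(v,w)| / sqrt(B(v,v) B(w,w)),  d = arcosh of it *)
Definition cosh_dist (R : realType) (V : lmodType R[i]) (B : V -> V -> R[i])
    (v w : V) : R :=
  complex.Re `|B v w| / Num.sqrt (complex.Re (B v v) * complex.Re (B w w)).

Definition hdist (R : realType) (V : lmodType R[i]) (B : V -> V -> R[i])
    (v w : V) : R :=
  let c := cosh_dist B v w in ln (c + Num.sqrt (c ^+ 2 - 1)).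

Definition unitaryB (R : realType) (V : lmodType R[i]) (B : V -> V -> R[i])
    (f : V -> V) : Prop :=
  [/\ (forall (a : R[i]) (u v : V), f (a *: u + v) = a *: f u + f v),
      (forall u v : V, B (f u) (f v) = B u v) &
      (forall w : V, exists u : V, f u = w)].

Definition mx2 (R : realType) (a b c d : R[i]) : 'M[R[i]]_2 :=
  \matrix_(i < 2, j < 2)
    if (i : nat) == 0%N then (if (j : nat) == 0%N then a else b)
    else (if (j : nat) == 0%N then c else d).

(* Gram matrix of B(z,w) = z1 conj(w1) - z2 conj(w2) in the basis (e1,e2) *)
Definition J11 (R : realType) : 'M[R[i]]_2 := mx2 1 0 0 (-1).

Definition SU11 (R : realType) (g : 'M[R[i]]_2) : Prop :=
  \det g = 1 /\ (map_mx Num.conj g)^T *m J11 R *m g = J11 R.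

(* change of basis from (xi1, xi2) to (e1, e2), xi_{1,2} = (e1 +- e2)/sqrt 2 *)
Definition Qxi (R : realType) : 'M[R[i]]_2 :=
  let s := (Num.sqrt 2 : R)^-1 in mx2 s%:C s%:C s%:C (- s%:C).

(* g(lambda, b): matrix [[lambda, i b],[0, lambda^-1]] in the basis (xi1,xi2),
   written in the basis (e1,e2). *)
Definition gP (R : realType) (l b : R) : 'M[R[i]]_2 :=
  Qxi R *m mx2 l%:C ('i * b%:C) 0 (l^-1)%:C *m (Qxi R)^-1.

Definition mx_close (R : realType) (g h : 'M[R[i]]_2) (d : R) : Prop :=
  forall i j : 'I_2, complex.Re `|g i j - h i j| < d.

(* rho g : V -> V is a unitary representative of the class rho(g) in PU(B). *)
Definition proj_rep (R : realType) (V : lmodType R[i]) (B : V -> V -> R[i])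
    (rho : 'M[R[i]]_2 -> V -> V) : Prop :=
  [/\ (forall g, SU11 g -> unitaryB B (rho g)),
      (forall g h, SU11 g -> SU11 h -> exists c : R[i],
         `|c| = 1 /\ forall v, rho (g *m h) v = c *: rho g (rho h v)) &
      (* factors through PSU(1,1) = SU(1,1)/{+-1} *)
      (exists c : R[i], forall v, rho (- 1%:M) v = c *: v)].

Definition orbitally_continuous (R : realType) (V : lmodType R[i])
    (B : V -> V -> R[i]) (rho : 'M[R[i]]_2 -> V -> V) : Prop :=
  forall (x : V) (g0 : 'M[R[i]]_2), posv B x -> SU11 g0 ->
  forall eps : R, 0 < eps -> exists2 del : R, 0 < del &
    forall g, SU11 g -> mx_close g g0 del ->
      hdist B (rho g x) (rho g0 x) < eps.

Definition irreducible_rep (R : realType) (V : lmodType R[i])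
    (B : V -> V -> R[i]) (e : V) (rho : 'M[R[i]]_2 -> V -> V) : Prop :=
  [/\ (* no fixed point in H^oo_C or in its boundary *)
      ~ (exists v : V, (posv B v \/ isotropic B v) /\
           forall g, SU11 g -> same_line v (rho g v)),
      (* no invariant pair of boundary points *)
      ~ (exists v w : V, [/\ isotropic B v, isotropic B w, ~ same_line v w &
           forall g, SU11 g ->
             (same_line v (rho g v) /\ same_line w (rho g w)) \/
             (same_line w (rho g v) /\ same_line v (rho g w))]) &
      (* no proper invariant complex hyperbolic subspace, i.e. no closed
         complex linear subspace L containing a positive vector, L <> H,
         with rho(g) L = L *)
      ~ (exists L : V -> Prop,
           [/\ L 0,
               (forall (a : R[i]) u v, L u -> L v -> L (a *: u + v)) &
            [/\
               (forall (s : nat -> V) (v : V), (forall n, L (s n)) ->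
                  (forall eps : R, 0 < eps -> exists N : nat, forall n : nat,
                     (N <= n)%N -> hnorm B e (s n - v) < eps) -> L v),
               (exists v, L v /\ posv B v),
               (exists u, ~ L u) &
               forall g v, SU11 g -> L v -> L (rho g v)]])].

From HB Require Import structures.
From mathcomp Require Import all_boot all_order all_algebra.
From mathcomp Require Import complex.
From mathcomp Require Import reals exp.
From mathcomp Require Import ring lra.
Set Implicit Arguments. Unset Strict Implicit. Unset Printing Implicit Defensive.
Import Order.TTheory GRing.Theory Num.Theory.
Local Open Scope ring_scope.
Local Open Scope complex_scope.

(* Write N_b := L 1 b and A_l := L l 0 for the lift of g(1,b) and g(l,0), so
   that A_l N_b = N_(l^2 b) A_l.  The N_b fix eta1: their eigenvalue is a
   positive character of (R,+) invariant under b |-> 2 b, hence trivial.  As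
   A_l eta2 = l^-t eta2, the numbers f b := B (N_b eta2) eta2 satisfy
   f b = b^t w for b > 0, where w := f 1, and f (-b) = conj (f b).  The
   vectors N_b eta2 - eta2 and N_(-1) eta2 - 2 eta2 + N_1 eta2 are B-orthogonal
   to the isotropic eta1, so their B-squares -2 b^t Re w and 2 (2^t - 4) Re w
   are <= 0.  If Re w = 0, then N_1 eta2 = eta2 + w eta1, whence f 2 = 2 w and
   t = 1; here w <> 0, for otherwise [eta2] would be a second fixed point of
   rho(P).  If Re w > 0, then t <= 2, and t > 0 since otherwise the Hilbert
   norm of N_b eta2 - eta2 would stay above sqrt (2 Re w) as b -> 0,
   contradicting continuity. *)

Lemma conjc_realM (R : realType) (x : R) (y : R[i]) : (x%:C * y)^*%C = x%:C * y^*%C.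
Proof. by rewrite rmorphM; congr (_ * _); exact: conjc_real. Qed.

Section UnitaryMap.
Variables (R : realType) (V : lmodType R[i]) (B : V -> V -> R[i]) (f : V -> V).
Hypothesis hf : unitaryB B f.

Lemma unitaryD u v : f (u + v) = f u + f v.
Proof. by case: hf => hl _ _; have := hl 1 u v; rewrite !scale1r. Qed.

Lemma unitary0 : f 0 = 0.
Proof. by apply: (@addrI _ (f 0)); rewrite -unitaryD !addr0. Qed.

Lemma unitaryZ (a : R[i]) u : f (a *: u) = a *: f u.
Proof. by case: hf => hl _ _; have := hl a u 0; rewrite !addr0 unitary0 addr0. Qed.

Lemma unitary_form u v : B (f u) (f v) = B u v.
Proof. by case: hf. Qed.

End UnitaryMap.

Section HermitianForm.
Variables (R : realType) (V : lmodType R[i]) (B : V -> V -> R[i]).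
Hypothesis hB : hermitian_form B.

Lemma hermC u v : B v u = (B u v)^*.
Proof. by case: hB. Qed.

Lemma hermDl u v w : B (u + v) w = B u w + B v w.
Proof. by case: hB => hl _; have := hl 1 u v w; rewrite scale1r mul1r. Qed.

Lemma herm0l w : B 0 w = 0.
Proof. by apply: (@addrI _ (B 0 w)); rewrite -hermDl !addr0. Qed.

Lemma hermZl (a : R[i]) u w : B (a *: u) w = a * B u w.
Proof. by case: hB => hl _; have := hl a u 0 w; rewrite !addr0 herm0l addr0. Qed.

Lemma hermNl u w : B (- u) w = - B u w.
Proof. by rewrite -scaleN1r hermZl mulN1r. Qed.

Lemma hermBl u v w : B (u - v) w = B u w - B v w.
Proof. by rewrite hermDl hermNl. Qed.

Lemma hermDr u v w : B w (u + v) = B w u + B w v.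
Proof. by rewrite !(hermC _ w) hermDl rmorphD. Qed.

Lemma hermZr (a : R[i]) u w : B w (a *: u) = a^*%C * B w u.
Proof. by rewrite !(hermC _ w) hermZl rmorphM. Qed.

Lemma hermNr u w : B w (- u) = - B w u.
Proof. by rewrite !(hermC _ w) hermNl rmorphN. Qed.

Lemma hermBr u v w : B w (u - v) = B w u - B w v.
Proof. by rewrite hermDr hermNr. Qed.

Lemma oppB_le_hip e x : - B x x <= hip B e x x.
Proof. by rewrite /hip lerBrDr addNr -mulrA mulr_ge0 ?ler0n ?mulcJ_ge0. Qed.

Section IsotropicLine.
Variables e eta : V.
Hypothesis orth_e_neg : forall w, B w e = 0 -> w != 0 -> B w w < 0.
Hypothesis eta_iso : isotropic B eta.

Lemma orth_isotropic_decomp v : B v eta = 0 ->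
  exists tau w, [/\ v = w + tau *: eta, B w e = 0 & B w w = B v v].
Proof.
case: eta_iso => eta_nz eta_eta v_eta.
have eta_e : B eta e != 0.
  by apply/eqP => h; move: (orth_e_neg h eta_nz); rewrite eta_eta ltxx.
exists (B v e / B eta e), (v - (B v e / B eta e) *: eta); split.
- by rewrite subrK.
- by rewrite hermBl hermZl divfK // subrr.
rewrite !(hermBl, hermBr, hermZl, hermZr) eta_eta v_eta (hermC v eta) v_eta.
by rewrite conjc0 !(mulr0, subr0).
Qed.

Lemma orth_isotropic_le0 v : B v eta = 0 -> B v v <= 0.
Proof.
move=> /orth_isotropic_decomp [tau [w [_ w_e <-]]].
have [->|w_nz] := eqVneq w 0; first by rewrite herm0l.
exact/ltW/orth_e_neg.
Qed.

Lemma orth_isotropic_eq0 v : B v eta = 0 -> B v v = 0 -> exists tau, v = tau *: eta.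
Proof.
move=> /orth_isotropic_decomp [tau [w [-> w_e <-]]] w_w.
exists tau; have [->|w_nz] := eqVneq w 0; first by rewrite add0r.
by move: (orth_e_neg w_e w_nz); rewrite w_w ltxx.
Qed.

End IsotropicLine.

Section IsotropicPair.
Variables eta1 eta2 : V.
Hypotheses (iso1 : B eta1 eta1 = 0) (iso2 : B eta2 eta2 = 0) (eta12 : B eta1 eta2 = 1).

Lemma eta21 : B eta2 eta1 = 1.
Proof. by rewrite hermC eta12 conjc1. Qed.

Lemma pair_form (a b a' b' : R[i]) :
  B (a *: eta1 + b *: eta2) (a' *: eta1 + b' *: eta2) = a * b'^*%C + b * a'^*%C.
Proof.
rewrite !(hermDl, hermDr, hermZl, hermZr) iso1 iso2 eta12 eta21.
by rewrite !mulr0 !mulr1 addr0 add0r mulrC [b * _]mulrC.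
Qed.

Lemma isotropic_pair_not_same_line : ~ same_line eta1 eta2.
Proof.
case=> c [_ eta2E]; move: eta12; rewrite eta2E hermZr iso1 mulr0 => /eqP.
by rewrite eq_sym oner_eq0.
Qed.

Lemma unitary_isotropic_axis f (p s : R) (c : R[i]) :
  unitaryB B f -> p != 0 -> s != 0 ->
  f eta1 = p%:C *: eta1 -> f (eta1 + eta2) = c *: (eta1 + s%:C *: eta2) ->
  f eta2 = p^-1%:C *: eta2.
Proof.
move=> hf p_nz s_nz f1 f12.
(* B (f eta2) (f eta1) = 1 makes c real; then B (f eta2) (f eta2) = 0 gives c = p. *)
have f2 : f eta2 = (c - p%:C) *: eta1 + (c * s%:C) *: eta2.
  apply: (addrI (f eta1)); rewrite -(unitaryD hf) f12 f1 scalerDr scalerA scalerBl.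
  by rewrite addrA addrCA subrr addr0.
have c_real : c = (p * s)^-1%:C.
  have f1' : f eta1 = p%:C *: eta1 + 0 *: eta2 by rewrite scale0r addr0 f1.
  have := unitary_form hf eta2 eta1; rewrite f1' f2 eta21 pair_form.
  rewrite conjc0 conjc_real mulr0 add0r.
  move=> cps; apply: (@mulIf _ (p * s)%:C); first by rewrite fmorph_eq0 mulf_neq0.
  by rewrite -rmorphM mulVf ?mulf_neq0 // rmorph1 -cps rmorphM; ring.
have rs : (p * s)^-1 * s = p^-1 by field; rewrite p_nz s_nz.
have := unitary_form hf eta2 eta2; rewrite iso2 f2 pair_form c_real.
rewrite -rmorphB -rmorphM rs !conjc_real -!rmorphM -rmorphD => /complexI.
have -> : forall x, x / p + p^-1 * x = x * (2 / p) by move=> x; field.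
move=> /eqP; rewrite !mulf_eq0 invr_eq0 pnatr_eq0 (negbTE p_nz) !orbF => /eqP ->.
by rewrite scale0r add0r.
Qed.

End IsotropicPair.
End HermitianForm.

Lemma gt1_ler_powR (R : realType) (a x y : R) : 1 < a -> (a `^ x <= a `^ y) = (x <= y).
Proof.
move=> a_gt1; have a_gt0 := lt_trans ltr01 a_gt1.
by rewrite -[in LHS]ler_ln ?posrE ?powR_gt0 // !ln_powR ler_pM2r ?ln_gt0.
Qed.

Section ParabolicLift.
Variables (R : realType) (V : lmodType R[i]) (B : V -> V -> R[i]).
Hypothesis hB : hermitian_form B.
Variable L : R -> R -> V -> V.
Hypothesis L_unitary : forall l b, 0 < l -> unitaryB B (L l b).
Hypothesis L_mul : forall l b l' b', 0 < l -> 0 < l' -> forall v,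
  L (l * l') (l * b' + b / l') v = L l b (L l' b' v).

Let unip_unitary b : unitaryB B (L 1 b) := L_unitary b ltr01.

Lemma lift_id v : L 1 0 v = v.
Proof.
have [_ _ /(_ v) [u <-]] := L_unitary 0 ltr01.
by rewrite -L_mul ?ltr01 // mulr1 mulr0 mul0r addr0.
Qed.

Lemma lift_unipD b c v : L 1 b (L 1 c v) = L 1 (b + c) v.
Proof. by rewrite -L_mul ?ltr01 // mulr1 mul1r divr1 addrC. Qed.

Lemma lift_unip_conj l b v :
  0 < l -> L l 0 (L 1 b v) = L 1 (l * l * b) (L l 0 v).
Proof.
move=> l_gt0; rewrite -!L_mul ?ltr01 // mulr1 mul1r mul0r addr0 mulr0 add0r.
by congr L; field; rewrite gt_eqF.
Qed.

Lemma lift_unip_adj b x y : B (L 1 b x) y = B x (L 1 (- b) y).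
Proof. by rewrite -(unitary_form (unip_unitary b) x) lift_unipD subrr lift_id. Qed.

Lemma lift_decomp l b v : 0 < l -> L l b v = L 1 (b * l) (L l 0 v).
Proof. by move=> l_gt0; rewrite -L_mul ?ltr01 // mul1r mulr0 add0r mulfK ?gt_eqF. Qed.

Section Displacement.
Variables (e eta1 eta2 : V) (t : R).
Hypothesis orth_e_neg : forall w, B w e = 0 -> w != 0 -> B w w < 0.
Hypotheses (eta1_iso : isotropic B eta1) (iso2 : B eta2 eta2 = 0).
Hypothesis eta12 : B eta1 eta2 = 1.
Hypothesis lift_eta1_line : forall l b, 0 < l -> exists c, L l b eta1 = c *: eta1.
Hypothesis lift_eta1_pos : forall l b, 0 < l -> 0 < B (L l b eta1) eta2.
Hypothesis chi_eta1 : forall l, 0 < l -> L l 0 eta1 = (l `^ t)%:C *: eta1.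
Hypothesis chi_eta2 : forall l, 0 < l -> L l 0 eta2 = (l `^ t)^-1%:C *: eta2.
Hypothesis unip_eta2_cont : forall eps, 0 < eps -> exists2 del, 0 < del &
  forall b, `|b| < del -> hnorm B e (L 1 b eta2 - eta2) < eps.

Let eta1_coef (a : R[i]) : B (a *: eta1) eta2 = a.
Proof. by rewrite (hermZl hB) eta12 mulr1. Qed.

Lemma unip_eta1 b : L 1 b eta1 = eta1.
Proof.
pose k c := B (L 1 c eta1) eta2.
have k_eta1 c : L 1 c eta1 = k c *: eta1.
  by have [a La] := lift_eta1_line c ltr01; rewrite /k La eta1_coef.
have kD c c' : k (c + c') = k c * k c'.
  by rewrite /k -lift_unipD {1}k_eta1 (unitaryZ (unip_unitary c)) (hermZl hB) mulrC.
have k2 c : k (c + c) = k c.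
  have s2_gt0 : 0 < Num.sqrt 2 :> R by rewrite sqrtr_gt0.
  have lt_nz : (Num.sqrt 2 `^ t)%:C != 0 :> R[i].
    by rewrite fmorph_eq0 gt_eqF ?powR_gt0.
  have -> : c + c = Num.sqrt 2 * Num.sqrt 2 * c.
    by rewrite -expr2 sqr_sqrtr ?ler0n // mulr_natl mulr2n.
  have := lift_unip_conj c eta1 s2_gt0.
  rewrite k_eta1 (unitaryZ (L_unitary 0 s2_gt0)) chi_eta1 // (unitaryZ (unip_unitary _)).
  rewrite k_eta1 !scalerA => /(congr1 (B ^~ eta2)); rewrite /= !eta1_coef mulrC.
  by move/(mulfI lt_nz).
have k1 c : k c = 1.
  have k_half : k (c / 2) * k (c / 2) = k (c / 2) by rewrite -kD k2.
  rewrite {1}(splitr c) kD k_half.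
  by apply: (mulIf (lt0r_neq0 (lift_eta1_pos (c / 2) ltr01))); rewrite mul1r.
by rewrite k_eta1 k1 scale1r.
Qed.

Local Notation w := (B (L 1 1 eta2) eta2).

Lemma unip_eta2_eta1 b : B (L 1 b eta2) eta1 = 1.
Proof. by rewrite lift_unip_adj unip_eta1 (eta21 hB eta12). Qed.

Lemma unip_eta2_opp b : B (L 1 (- b) eta2) eta2 = (B (L 1 b eta2) eta2)^*%C.
Proof. by rewrite lift_unip_adj opprK (hermC hB). Qed.

Lemma unip_eta2_scale l b : 0 < l ->
  B (L 1 (l * l * b) eta2) eta2 = (l `^ t * l `^ t)%:C * B (L 1 b eta2) eta2.
Proof.
move=> l_gt0; have A_unitary := L_unitary 0 l_gt0.
have lt_nz : (l `^ t)%:C != 0 :> R[i] by rewrite fmorph_eq0 gt_eqF ?powR_gt0.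
have eta2E : eta2 = L l 0 ((l `^ t)%:C *: eta2).
  by rewrite (unitaryZ A_unitary) chi_eta2 // scalerA fmorphV mulfV // scale1r.
have -> : L 1 (l * l * b) eta2 = L l 0 ((l `^ t)%:C *: L 1 b eta2).
  by rewrite {1}eta2E -lift_unip_conj // (unitaryZ (unip_unitary b)).
rewrite [X in B _ X]eta2E (unitary_form A_unitary) (hermZl hB) (hermZr hB).
by rewrite conjc_real rmorphM mulrA.
Qed.

Lemma unip_eta2_pow b : 0 < b -> B (L 1 b eta2) eta2 = (b `^ t)%:C * w.
Proof.
move=> b_gt0; have sb_gt0 : 0 < Num.sqrt b by rewrite sqrtr_gt0.
have bE : b = Num.sqrt b * Num.sqrt b * 1 by rewrite mulr1 -expr2 sqr_sqrtr ?ltW.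
by rewrite {1}bE unip_eta2_scale // -powRM ?sqrtr_ge0 // -expr2 sqr_sqrtr ?ltW.
Qed.

Lemma unip_eta2_shift_orth b : B (L 1 b eta2 - eta2) eta1 = 0.
Proof. by rewrite (hermBl hB) unip_eta2_eta1 (eta21 hB eta12) subrr. Qed.

Lemma unip_eta2_shift_form b :
  B (L 1 b eta2 - eta2) (L 1 b eta2 - eta2) =
  - (B (L 1 b eta2) eta2 + (B (L 1 b eta2) eta2)^*%C).
Proof.
rewrite (hermBl hB) !(hermBr hB) (unitary_form (unip_unitary b)) iso2.
by rewrite (hermC hB (L 1 b eta2) eta2) sub0r subr0 opprD.
Qed.

Lemma re_w_ge0 : 0 <= w + w^*%C.
Proof.
rewrite -oppr_le0 -unip_eta2_shift_form.
exact: (orth_isotropic_le0 hB orth_e_neg eta1_iso (unip_eta2_shift_orth 1)).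
Qed.

Lemma unip_eta2_of_re_w_eq0 : w + w^*%C = 0 -> L 1 1 eta2 = eta2 + w *: eta1.
Proof.
move=> re0; have [tau xE] := orth_isotropic_eq0 hB orth_e_neg eta1_iso
  (unip_eta2_shift_orth 1) (ltac:(by rewrite unip_eta2_shift_form re0 oppr0)).
have L1E : L 1 1 eta2 = eta2 + tau *: eta1 by rewrite -xE addrC subrK.
by rewrite {2}L1E (hermDl hB) eta1_coef iso2 add0r.
Qed.

Lemma t_eq1_of_re_w_eq0 : w + w^*%C = 0 -> w != 0 -> t = 1.
Proof.
move=> re0 w_nz; have L1E := unip_eta2_of_re_w_eq0 re0.
have two_gt1 : (1 : R) < 2 by rewrite ltr1n.
have : (2 `^ t)%:C * w = (2 `^ 1)%:C * w.
  rewrite -unip_eta2_pow ?ltr0n // powRr1 ?ler0n // rmorph_nat.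
  rewrite -[2]/(1 + 1) -lift_unipD L1E (unitaryD (unip_unitary 1)).
  rewrite (unitaryZ (unip_unitary 1)) L1E unip_eta1 !(hermDl hB) !eta1_coef iso2.
  by rewrite !add0r mulr_natl mulr2n.
move/(mulIf w_nz)/complexI => h.
apply/eqP; rewrite eq_le -(gt1_ler_powR t 1 two_gt1).
by rewrite -(gt1_ler_powR 1 t two_gt1) h lexx.
Qed.

Lemma unip_eta2_fixed : w = 0 ->
  forall l b, 0 < l -> L l b eta2 = (l `^ t)^-1%:C *: eta2.
Proof.
move=> w0; have L1 : L 1 1 eta2 = eta2.
  by rewrite unip_eta2_of_re_w_eq0 w0 ?conjc0 ?addr0 // scale0r addr0.
have unip_pos b : 0 < b -> L 1 b eta2 = eta2.
  move=> b_gt0; have sb_gt0 : 0 < Num.sqrt b by rewrite sqrtr_gt0.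
  have lt_nz : (Num.sqrt b `^ t)^-1%:C != 0 :> R[i].
    by rewrite fmorph_eq0 invr_eq0 gt_eqF ?powR_gt0.
  have := lift_unip_conj 1 eta2 sb_gt0.
  rewrite L1 mulr1 -expr2 sqr_sqrtr ?ltW // chi_eta2 // (unitaryZ (unip_unitary b)).
  by move/(scalerI lt_nz) <-.
have unip b : L 1 b eta2 = eta2.
  have nb : - b <= `|b| by rewrite -normrN ler_norm.
  have c_gt0 : 0 < `|b| + 1 by rewrite ltr_pwDr.
  by rewrite -{1}(unip_pos (`|b| + 1) c_gt0) lift_unipD unip_pos //; lra.
by move=> l b l_gt0; rewrite lift_decomp // chi_eta2 // (unitaryZ (unip_unitary _)) unip.
Qed.

Lemma re_w_eq0_of_t_le0 : t <= 0 -> w + w^*%C = 0.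
Proof.
move=> t_le0; apply/eqP/contraT => re_nz.
have r_gt0 : 0 < complex.Re (w + w^*%C).
  by move: (re_w_ge0); rewrite le_eqVlt eq_sym (negbTE re_nz) ltcE => /andP[].
have [del del_gt0 cont] := unip_eta2_cont (ltac:(by rewrite sqrtr_gt0) :
  0 < Num.sqrt (complex.Re (w + w^*%C))).
pose b := del / (del + 1).
have b_gt0 : 0 < b by rewrite divr_gt0 // addr_gt0.
have b_le1 : b <= 1 by rewrite ler_pdivrMr ?addr_gt0 // mul1r lerDl.
have b_del : `|b| < del.
  by rewrite gtr0_norm // ltr_pdivrMr ?addr_gt0 // mulrDr mulr1 ltrDr mulr_gt0.
have bt_ge1 : 1 <= b `^ t by rewrite -(powRr0 b) ger_powR ?b_gt0.
have : w + w^*%C <= hip B e (L 1 b eta2 - eta2) (L 1 b eta2 - eta2).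
  apply: le_trans (oppB_le_hip _ _ _).
  rewrite unip_eta2_shift_form opprK (unip_eta2_pow b_gt0) conjc_realM -mulrDr.
  by rewrite ler_peMl ?re_w_ge0 // -[1]/(1%:C) lecR.
move: (cont b b_del); rewrite /hnorm ltr_sqrt // => hip_lt.
by rewrite lecE leNgt hip_lt andbF.
Qed.

Lemma re_w_eq0_of_t_gt2 : 2 < t -> w + w^*%C = 0.
Proof.
move=> t_gt2; apply/eqP; rewrite eq_le re_w_ge0 andbT.
pose v := L 1 (-1) eta2 - 2%:R *: eta2 + L 1 1 eta2.
have v_eta1 : B v eta1 = 0.
  rewrite /v !(hermDl hB, hermNl hB, hermZl hB) !unip_eta2_eta1 (eta21 hB eta12).
  ring.
have Lp_Lm : B (L 1 1 eta2) (L 1 (-1) eta2) = (2 `^ t)%:C * w.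
  by rewrite -lift_unip_adj lift_unipD -unip_eta2_pow ?ltr0n.
have v_v : B v v = ((2 `^ t)%:C - 4%:R) * (w + w^*%C).
  rewrite /v !(hermDl hB, hermNl hB, hermZl hB, hermDr hB, hermNr hB, hermZr hB).
  rewrite !(unitary_form (unip_unitary _)) iso2 Lp_Lm (hermC hB (L 1 1 eta2)) Lp_Lm.
  rewrite (hermC hB (L 1 (-1) eta2)) (hermC hB (L 1 1 eta2) eta2) unip_eta2_opp.
  rewrite conjc_nat conjc_realM conjcK.
  ring.
have four_lt : 4%:R < (2 `^ t)%:C :> R[i].
  rewrite -(rmorph_nat (real_complex R)) ltcR.
  have -> : 4%:R = 2 `^ 2%:R :> R by rewrite powR_mulrn ?ler0n // expr2 -natrM.
  by rewrite ltNge gt1_ler_powR ?ltr1n // -ltNge.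
have := orth_isotropic_le0 hB orth_e_neg eta1_iso v_eta1.
by rewrite v_v pmulr_rle0 // subr_gt0.
Qed.

Lemma displacement_range : w != 0 -> 0 < t <= 2.
Proof.
move=> w_nz; have t1 := t_eq1_of_re_w_eq0 ^~ w_nz.
apply/andP; split; [rewrite ltNge | rewrite leNgt]; apply/negP.
- by move=> t_le0; have := t1 (re_w_eq0_of_t_le0 t_le0); lra.
- by move=> t_gt2; have := t1 (re_w_eq0_of_t_gt2 t_gt2); lra.
Qed.

End Displacement.

End ParabolicLift.

Theorem mainTheorem12 (R : realType) (V : lmodType R[i]) (B : V -> V -> R[i])
    (e : V) (rho : 'M[R[i]]_2 -> V -> V)
    (eta1 eta2 : V) (L : R -> R -> V -> V) (t : R) :
  sig1inf_space B e ->
  proj_rep B rho -> orbitally_continuous B rho -> irreducible_rep B e rho ->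
  (* eta1, eta2 isotropic with B(eta1, eta2) = 1 *)
  isotropic B eta1 -> isotropic B eta2 -> B eta1 eta2 = 1 ->
  (* [eta1] is the unique common fixed boundary point of rho(P) *)
  (forall l b : R, 0 < l -> same_line eta1 (rho (gP l b) eta1)) ->
  (forall w : V, isotropic B w ->
     (forall l b : R, 0 < l -> same_line w (rho (gP l b) w)) ->
     same_line eta1 w) ->
  (* [eta2] is the other endpoint of the common axis of the rho(g(l,0)):
     the geodesic {[eta1 + s eta2] : s > 0} is invariant under each of them *)
  (forall l : R, 0 < l ->
     (forall s : R, 0 < s -> exists2 s' : R, 0 < s' &
        same_line (rho (gP l 0) (eta1 + s%:C *: eta2)) (eta1 + s'%:C *: eta2)) /\
     (forall s' : R, 0 < s' -> exists2 s : R, 0 < s &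
        same_line (rho (gP l 0) (eta1 + s%:C *: eta2)) (eta1 + s'%:C *: eta2))) ->
  (* L : P -> U(B) is a continuous homomorphism lifting rho|_P ... *)
  (forall l b : R, 0 < l -> unitaryB B (L l b)) ->
  (forall l b : R, 0 < l -> exists2 c : R[i], c != 0 &
     forall v, L l b v = c *: rho (gP l b) v) ->
  (forall l b l' b' : R, 0 < l -> 0 < l' -> forall v,
     L (l * l') (l * b' + b / l') v = L l b (L l' b' v)) ->
  (forall (v : V) (l0 b0 : R), 0 < l0 -> forall eps : R, 0 < eps ->
     exists2 del : R, 0 < del & forall l b : R, 0 < l ->
       `|l - l0| < del -> `|b - b0| < del ->
       hnorm B e (L l b v - L l0 b0 v) < eps) ->
  (* ... normalized by B(rho(g(l,b)) eta1, eta2) > 0 *)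
  (forall l b : R, 0 < l -> 0 < B (L l b eta1) eta2) ->
  (* chi(l) = l^t *)
  (forall l : R, 0 < l -> L l 0 eta1 = (l `^ t)%:C *: eta1) ->
  0 < t <= 2%:R.
Proof.
move=> [hB _ orth_e_neg _] _ _ _ eta1_iso eta2_iso eta12 fix1 uniq1 axis
  L_unitary L_lift L_mul L_cont L_pos chi1.
have iso2 : B eta2 eta2 = 0 := eta2_iso.2.
have eta1_line l b : 0 < l -> exists c, L l b eta1 = c *: eta1.
  move=> l_gt0; have [d _ ->] := L_lift l b l_gt0.
  by have [c [_ ->]] := fix1 l b l_gt0; exists (d * c); rewrite scalerA.
have chi2 l : 0 < l -> L l 0 eta2 = (l `^ t)^-1%:C *: eta2.
  move=> l_gt0; have [/(_ 1 ltr01) [s s_gt0 [c [c_nz hc]]] _] := axis l l_gt0.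
  rewrite rmorph1 scale1r in hc; have [d _ hd] := L_lift l 0 l_gt0.
  have hL : L l 0 (eta1 + eta2) = (d / c) *: (eta1 + s%:C *: eta2).
    by rewrite hd hc scalerA mulfVK.
  exact: (unitary_isotropic_axis hB eta1_iso.2 iso2 eta12 (L_unitary l 0 l_gt0)
    (lt0r_neq0 (powR_gt0 t l_gt0)) (lt0r_neq0 s_gt0) (chi1 l l_gt0) hL).
have cont2 eps : 0 < eps -> exists2 del, 0 < del &
    forall b, `|b| < del -> hnorm B e (L 1 b eta2 - eta2) < eps.
  move=> eps_gt0; have [del del_gt0 near] := L_cont eta2 1 0 ltr01 eps eps_gt0.
  exists del => // b b_del; rewrite -{2}(lift_id L_unitary L_mul eta2).
  by apply: near; rewrite ?subrr ?normr0 ?subr0.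
have [w0|w_nz] := eqVneq (B (L 1 1 eta2) eta2) 0; last first.
  exact: (displacement_range hB L_unitary L_mul orth_e_neg eta1_iso iso2 eta12
    eta1_line L_pos chi1 chi2 cont2 w_nz).
have fix2 := unip_eta2_fixed hB L_unitary L_mul orth_e_neg eta1_iso iso2 eta12
  eta1_line L_pos chi1 chi2 w0.
case: (isotropic_pair_not_same_line hB eta1_iso.2 eta12).
apply: uniq1 => // l b l_gt0; have [d d_nz hd] := L_lift l b l_gt0.
exists (d^-1 * (l `^ t)^-1%:C); split.
  by rewrite mulf_neq0 ?invr_eq0 // fmorph_eq0 invr_eq0 gt_eqF ?powR_gt0.
by rewrite -scalerA -(fix2 l b l_gt0) hd scalerA mulVf // scale1r.
Qed.
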